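(* The asynchronous iteration corresponding to the synchronous block ILU fixed-point iteration $\mathbf{x}^{n+1} = \mathbf{h}(\mathbf{x}^n)$ is locally convergent, ie., if $\mathbf{x}_*$ is a fixed point of the asynchronous iteration, it is a point of attraction of the iteration.
   Context: Let $\mathbf{A}\in\mathbb{R}^{n\times n}$ be partitioned into square $b\times b$ blocks, and $S_B$ a set of block indices containing all diagonal blocks. The unknowns (entries of the block ILU factors $\mathbf{L}_{ij}$, $i>j$, and $\mathbf{U}_{ij}$, $i\le j$, for $(i,j)\in S_B$) form $\mathbf{x}\in\mathbb{R}^m$, $m=|S_B|b^2$, with $\mathbf{X}_{ij}$ the $b\times b$ block for index $(i,j)$ and $\beta_B:S_B\to\{1,\dots,m/b^2\}$ a bijective block ordering. The map $\mathbf{h}:D_B\to\mathbb{R}^m$ is given blockwise by $\mathbf{H}_{ij}(\mathbf{x})=(\mathbf{A}_{ij}-\sum_{k=1}^{j-1}\mathbf{X}_{ik}\mathbf{X}_{kj})\mathbf{X}_{jj}^{-1}$ for $i>j$ and $\mathbf{H}_{ij}(\mathbf{x})=\mathbf{A}_{ij}-\sum_{k=1}^{i-1}\mathbf{X}_{ik}\mathbf{X}_{kj}$ for $i\le j$, on $D_B:=\{\mathbf{x}: \mathbf{X}_{jj}\text{ nonsingular for all diagonal blocks}\}$. The asynchronous (block-asynchronous) iteration is $\mathbf{X}_{ij}^{k+1}=\mathbf{H}_{ij}(x_1^{k-s_1(k)},\dots,x_m^{k-s_m(k)})$ if $\beta_B(i,j)=u(k)$ and $\mathbf{X}_{ij}^{k+1}=\mathbf{X}_{ij}^k$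 otherwise, where the shifts satisfy $0\le s_i(k)\le\min\{k-1,\hat s\}$ for a fixed $\hat s\in\mathbb{N}$, and the update function $u:\mathbb{N}\to\{1,\dots,m/b^2\}$ satisfies: for every $i$ and $k$ there exists $l>k$ with $u(l)=i$. *)

From HB Require Import structures.
From mathcomp Require Import all_boot all_order all_algebra.
From mathcomp Require Import all_classical all_reals all_analysis.
Set Implicit Arguments. Unset Strict Implicit. Unset Printing Implicit Defensive.
Import Order.TTheory GRing.Theory Num.Theory.
Local Open Scope ring_scope.

(* Global row/column index of local index r inside block i, for an
   (N*b) x (N*b) matrix partitioned into N x N blocks of size b x b:
   value i*b + r (0-based). *)
Lemma gidx_proof (N b : nat) (i : 'I_N) (r : 'I_b) : (i * b + r < N * b)%N.
Proof.
have hr := ltn_ord r; have hi := ltn_ord i.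
apply: (@leq_trans ((i.+1) * b)); first by rewrite mulSn [(b + _)%N]addnC ltn_add2l.
by rewrite leq_mul2r hi orbT.
Qed.

Definition gidx (N b : nat) (i : 'I_N) (r : 'I_b) : 'I_(N * b) :=
  Ordinal (gidx_proof i r).

Definition Ablk (R : ringType) (N b : nat) (A : 'M[R]_(N * b)) (i j : 'I_N)
  : 'M[R]_b := \matrix_(r < b, c < b) A (gidx i r) (gidx j c).

(* A vector of unknowns x in R^m is represented by a family of b x b blocks
   X i j; only the blocks with (i,j) \in S are unknowns, the others are
   meaningless (they are masked to 0 whenever used). *)
Definition mask (R : ringType) (N b : nat) (S : {set 'I_N * 'I_N})
  (X : 'I_N -> 'I_N -> 'M[R]_b) (i j : 'I_N) : 'M[R]_b :=
  if (i, j) \in S then X i j else 0.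

Definition inDB (R : comUnitRingType) (N b : nat)
  (X : 'I_N -> 'I_N -> 'M[R]_b) : Prop :=
  forall j : 'I_N, X j j \in unitmx.

(* The block map H_ij (0-based indices: k = 1..j-1 becomes k < j). *)
Definition Hblk (R : comUnitRingType) (N b : nat) (A : 'M[R]_(N * b))
  (S : {set 'I_N * 'I_N}) (X : 'I_N -> 'I_N -> 'M[R]_b) (i j : 'I_N)
  : 'M[R]_b :=
  if (j < i)%N then
    (Ablk A i j - \sum_(k < N | (k < j)%N) mask S X i k *m mask S X k j)
      *m invmx (mask S X j j)
  else
    Ablk A i j - \sum_(k < N | (k < i)%N) mask S X i k *m mask S X k j.

(* The delayed ("mixed") vector (x_1^{k-s_1(k)}, ..., x_m^{k-s_m(k)}),
   scalar components indexed by (block i j, row r, column c). *)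
Definition delayed (R : Type) (N b : nat)
  (x : nat -> 'I_N -> 'I_N -> 'M[R]_b)
  (s : nat -> 'I_N -> 'I_N -> 'I_b -> 'I_b -> nat) (k : nat)
  : 'I_N -> 'I_N -> 'M[R]_b :=
  fun i j => \matrix_(r < b, c < b) x (k - s k i j r c)%N i j r c.

Definition async_run (R : comUnitRingType) (N b : nat) (A : 'M[R]_(N * b))
  (S : {set 'I_N * 'I_N}) (s : nat -> 'I_N -> 'I_N -> 'I_b -> 'I_b -> nat)
  (u : nat -> 'I_N * 'I_N) (x : nat -> 'I_N -> 'I_N -> 'M[R]_b) : Prop :=
  forall k : nat, (1 <= k)%N -> forall i j : 'I_N, (i, j) \in S ->
    x k.+1 i j = if u k == (i, j) then Hblk A S (delayed x s k) i j
                 else x k i j.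

Definition admissible_shifts (N b : nat) (S : {set 'I_N * 'I_N})
  (shat : nat) (s : nat -> 'I_N -> 'I_N -> 'I_b -> 'I_b -> nat) : Prop :=
  forall k : nat, (1 <= k)%N -> forall (i j : 'I_N) (r c : 'I_b),
    (i, j) \in S -> (s k i j r c <= minn k.-1 shat)%N.

Definition admissible_update (N : nat) (S : {set 'I_N * 'I_N})
  (u : nat -> 'I_N * 'I_N) : Prop :=
  (forall k, u k \in S) /\
  (forall p, p \in S -> forall k : nat, exists l : nat, (k < l)%N /\ u l = p).

From Pilot Require Import Defs.
From HB Require Import structures.
From mathcomp Require Import all_boot all_order all_algebra.
From mathcomp Require Import all_classical all_reals all_analysis.
From mathcomp Require Import zify.
Import Order.TTheory GRing.Theory Num.Theory.
Import numFieldNormedType.Exports.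
Local Open Scope classical_set_scope.
Local Open Scope ring_scope.

(* The block ILU map h is triangular: ranking the blocks so that row i of U
   comes before column i of L, which comes before row i + 1 of U, the block
   H_ij only reads blocks of strictly smaller rank.  Two inductions on the
   rank give the theorem.
   Exactness: if every block of rank < r equals x_* from time K on, then after
   time K + shat all delayed reads of such blocks are exact, so a block of
   rank r is exact from its first update after K + shat on.  Hence every run
   reaches x_* after finitely many steps.
   Invertibility: h is continuous at x_*, whose diagonal blocks are
   invertible.  Choosing the radii rank by rank, from the last one down, gives
   delta such that a run starting delta-close to x_* stays as close as wanted
   to x_* at all times, so all its diagonal blocks, and those of the delayed
   vectors, stay invertible. *)

Section EntrywiseConvergence.
Context {R : realType} {T : Type} {F : set_system T} {FF : Filter F}.

Definition cvg_entrywise {m n} (M : T -> 'M[R]_(m, n)) (L : 'M[R]_(m, n)) :=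
  forall i j, M x i j @[x --> F] --> L i j.

Lemma cvg_entrywise_cst {m n} (L : 'M[R]_(m, n)) : cvg_entrywise (fun=> L) L.
Proof. by move=> i j; exact: cvg_cst. Qed.

Lemma cvg_entrywiseB {m n} {M M' : T -> 'M[R]_(m, n)} {L L'} :
  cvg_entrywise M L -> cvg_entrywise M' L' ->
  cvg_entrywise (fun x => M x - M' x) (L - L').
Proof.
move=> h h' i j; rewrite !mxE; under eq_cvg do rewrite !mxE.
exact: cvgB (h i j) (h' i j).
Qed.

Lemma cvg_entrywise_mul {m n p} {M : T -> 'M[R]_(m, n)} {M' : T -> 'M[R]_(n, p)}
    {L L'} :
  cvg_entrywise M L -> cvg_entrywise M' L' ->
  cvg_entrywise (fun x => M x *m M' x) (L *m L').
Proof.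
move=> h h' i j; rewrite mxE; under eq_cvg do rewrite mxE.
apply: cvg_big => [|k _]; [exact: add_continuous | exact: cvgM (h i k) (h' k j)].
Qed.

Lemma cvg_entrywise_sum {I : Type} (r : seq I) (P : pred I) {m n}
    {M : I -> T -> 'M[R]_(m, n)} {L : I -> 'M[R]_(m, n)} :
  (forall k, P k -> cvg_entrywise (M k) (L k)) ->
  cvg_entrywise (fun x => \sum_(k <- r | P k) M k x) (\sum_(k <- r | P k) L k).
Proof.
move=> h i j; rewrite summxE; under eq_cvg do rewrite summxE.
apply: cvg_big => [|k Pk]; [exact: add_continuous | exact: h].
Qed.

Lemma cvg_det {n} {M : T -> 'M[R]_n} {L} :
  cvg_entrywise M L -> \det (M x) @[x --> F] --> \det L.
Proof.
move=> h; apply: cvg_big => [|s _]; first exact: add_continuous.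
apply: cvgM; first exact: cvg_cst.
apply: cvg_big => [|i _]; [exact: mul_continuous | exact: h].
Qed.

Lemma cvg_entrywise_adj {n} {M : T -> 'M[R]_n} {L} :
  cvg_entrywise M L -> cvg_entrywise (fun x => \adj (M x)) (\adj L).
Proof.
move=> h i j; rewrite mxE; under eq_cvg do rewrite mxE.
apply: cvgM; first exact: cvg_cst.
by apply: cvg_det => r c; rewrite !mxE; under eq_cvg do rewrite !mxE; exact: h.
Qed.

Lemma near_unitmx {n} {M : T -> 'M[R]_n} {L} :
  cvg_entrywise M L -> L \in unitmx -> \forall x \near F, M x \in unitmx.
Proof.
rewrite unitmxE unitfE => /cvg_det /cvgrPdist_lt near_det detL.
have /near_det : 0 < `|\det L| by rewrite normr_gt0.
apply: filterS => x.
by rewrite unitmxE unitfE; apply: contraTneq => ->; rewrite subr0 ltxx.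
Qed.

Lemma cvg_entrywise_inv {n} {M : T -> 'M[R]_n} {L} :
  cvg_entrywise M L -> L \in unitmx ->
  cvg_entrywise (fun x => invmx (M x)) (invmx L).
Proof.
move=> h unitL i j; rewrite /invmx unitL mxE.
apply: cvg_trans (near_eq_cvg _) _.
  apply: filterS (near_unitmx h unitL) => x /= unitMx.
  by rewrite unitMx mxE.
have detL : \det L != 0 by rewrite -unitfE -unitmxE.
apply: cvgM; [exact: cvgV detL (cvg_det h) | exact: cvg_entrywise_adj h i j].
Qed.

End EntrywiseConvergence.

Definition blockwise {R : Type} {N b : nat} (T : {set 'I_N * 'I_N})
    (P : 'I_N -> 'I_N -> 'I_b -> 'I_b -> R -> Prop)
    (X : 'I_N -> 'I_N -> 'M[R]_b) :=
  forall p q r c, (p, q) \in T -> P p q r c (X p q r c).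

Definition agree_on {R : Type} {N b : nat} (T : {set 'I_N * 'I_N})
    (Xs : 'I_N -> 'I_N -> 'M[R]_b) :=
  blockwise T (fun p q r c y => y = Xs p q r c).

Section DependencyOrder.
Context {N : nat}.

(* Row i of U (diagonal included) has rank 2i, column j of L rank 2j + 1. *)
Definition blk_rank (i j : 'I_N) : nat := ((minn i j).*2 + (j < i))%N.

Lemma blk_rank_lt (i j : 'I_N) : (blk_rank i j < N.*2)%N.
Proof. by rewrite /blk_rank; have := ltn_ord i; have := ltn_ord j; lia. Qed.

Definition blocks_below (S : {set 'I_N * 'I_N}) (r : nat) :=
  [set pq in S | (blk_rank pq.1 pq.2 < r)%N].

Lemma blocks_below_sub S r : {subset blocks_below S r <= S}.
Proof. by move=> pq; rewrite inE => /andP[]. Qed.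

Lemma blocks_below_all S : blocks_below S N.*2 = S.
Proof. by apply/setP => -[p q]; rewrite inE blk_rank_lt andbT. Qed.

Lemma Hblk_local {R : comUnitRingType} {b} (A : 'M[R]_(N * b))
    (S : {set 'I_N * 'I_N}) (X Y : 'I_N -> 'I_N -> 'M[R]_b) (i j : 'I_N) :
  (forall p q, (p, q) \in S -> (blk_rank p q < blk_rank i j)%N ->
     X p q = Y p q) ->
  Hblk A S X i j = Hblk A S Y i j.
Proof.
move=> XY.
have maskXY p q : (blk_rank p q < blk_rank i j)%N ->
    Defs.mask S X p q = Defs.mask S Y p q.
  by rewrite /Defs.mask; case: ifP => // pqS /(XY _ _ pqS).
rewrite /Hblk; case: ifP => ji.
  rewrite maskXY; last by rewrite /blk_rank; lia.
  by congr ((_ - _) *m _); apply: eq_bigr => k kj; rewrite !maskXY // /blk_rank; lia.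
by congr (_ - _); apply: eq_bigr => k ki; rewrite !maskXY // /blk_rank; lia.
Qed.

Lemma Hblk_agree_below {R : comUnitRingType} {b : nat} {A : 'M[R]_(N * b)}
    {S : {set 'I_N * 'I_N}} {Xs : 'I_N -> 'I_N -> 'M[R]_b}
    (Xs_fixed : forall i j, (i, j) \in S -> Hblk A S Xs i j = Xs i j) r X :
  agree_on (blocks_below S r) Xs X ->
  forall p q, (p, q) \in blocks_below S r.+1 -> Hblk A S X p q = Xs p q.
Proof.
move=> XXs p q; rewrite inE /= => /andP[pqS pq_r]; rewrite -(Xs_fixed p q pqS).
apply: Hblk_local => p' q' pqS' lt_pq; apply/matrixP => r' c'.
by apply: XXs; rewrite inE pqS' /=; lia.
Qed.

End DependencyOrder.

Section AsyncRun.
Context {R : comUnitRingType} {N b : nat} {A : 'M[R]_(N * b)}.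
Context {S : {set 'I_N * 'I_N}} {shat : nat}.
Context {s : nat -> 'I_N -> 'I_N -> 'I_b -> 'I_b -> nat} {u : nat -> 'I_N * 'I_N}.
Context {x : nat -> 'I_N -> 'I_N -> 'M[R]_b}.
Context (hs : admissible_shifts S shat s) (hx : async_run A S s u x).

Lemma delayed_blockwise (T : {set 'I_N * 'I_N}) P k :
  {subset T <= S} -> (1 <= k)%N ->
  (forall k', (1 <= k')%N -> (k - shat <= k' <= k)%N -> blockwise T P (x k')) ->
  blockwise T P (delayed x s k).
Proof.
move=> TS k_gt0 Px p q r c pqT; have := hs k k_gt0 p q r c (TS _ pqT).
by rewrite mxE => delay_le; apply: Px => //; lia.
Qed.

Lemma async_run_invariant (P : 'M[R]_b -> Prop) p q k0 :
  (p, q) \in S -> (1 <= k0)%N -> P (x k0 p q) ->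
  (forall k, (k0 <= k)%N -> P (Hblk A S (delayed x s k) p q)) ->
  forall k, (k0 <= k)%N -> P (x k p q).
Proof.
move=> pqS k0_gt0 Pk0 PH; elim=> [|k IHk]; first by move/(leq_trans k0_gt0).
rewrite leq_eqVlt => /orP[/eqP <- // | /[!ltnS] k0k].
rewrite hx ?(leq_trans k0_gt0) //; case: eqP => _; [exact: PH | exact: IHk].
Qed.

End AsyncRun.

Section Closeness.
Context {R : realType} {N b : nat}.

Definition close_on (T : {set 'I_N * 'I_N}) (Xs : 'I_N -> 'I_N -> 'M[R]_b)
    (e : R) :=
  blockwise T (fun p q r c y => `|y - Xs p q r c| < e).

(* Blocks outside T are left free, as only the blocks of S are unknowns. *)
Definition close_nbhs (T : {set 'I_N * 'I_N}) (Xs : 'I_N -> 'I_N -> 'M[R]_b) :=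
  filter_from [set e : R | 0 < e] (fun e => [set X | close_on T Xs e X]).

Lemma close_on_le T Xs (e e' : R) X :
  e <= e' -> close_on T Xs e X -> close_on T Xs e' X.
Proof. by move=> ee' Xe p q r c /Xe /lt_le_trans; apply. Qed.

Global Instance close_nbhs_filter T Xs : Filter (close_nbhs T Xs).
Proof.
apply: filter_from_filter; first by exists 1 => /=.
move=> e1 e2 /= e1_gt0 e2_gt0; exists (Num.min e1 e2).
  by rewrite lt_min e1_gt0 e2_gt0.
by move=> X Xe; split; apply: close_on_le Xe; rewrite ge_min lexx ?orbT.
Qed.

End Closeness.

Section LocalConvergence.
Context {R : realType} {N b : nat} (A : 'M[R]_(N * b)) (S : {set 'I_N * 'I_N}).
Context (Xs : 'I_N -> 'I_N -> 'M[R]_b).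
Context (hdiag : forall i, (i, i) \in S) (XsD : inDB Xs).
Context (Xs_fixed : forall i j, (i, j) \in S -> Hblk A S Xs i j = Xs i j).
Context (shat : nat).

Lemma cvg_entrywise_mask p q :
  cvg_entrywise (F := close_nbhs S Xs)
    (fun X => Defs.mask S X p q) (Defs.mask S Xs p q).
Proof.
move=> r c; rewrite /Defs.mask; case: ifP => pqS; last exact: cvg_cst.
by apply/cvgrPdist_lt => e e_gt0; exists e => // X /= Xe; rewrite distrC Xe.
Qed.

Lemma cvg_entrywise_Hblk i j :
  cvg_entrywise (F := close_nbhs S Xs)
    (fun X => Hblk A S X i j) (Hblk A S Xs i j).
Proof.
have cvg_Schur k : cvg_entrywise (F := close_nbhs S Xs)
    (fun X => Ablk A i j -
       \sum_(l < N | (l < k)%N) Defs.mask S X i l *m Defs.mask S X l j)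
    (Ablk A i j -
       \sum_(l < N | (l < k)%N) Defs.mask S Xs i l *m Defs.mask S Xs l j).
  apply: cvg_entrywiseB; first exact: cvg_entrywise_cst.
  apply: cvg_entrywise_sum => l _.
  by apply: cvg_entrywise_mul; exact: cvg_entrywise_mask.
rewrite /Hblk; case: ifP => _ //; apply: cvg_entrywise_mul => //.
apply: cvg_entrywise_inv; first exact: cvg_entrywise_mask.
by rewrite /Defs.mask hdiag; exact: XsD.
Qed.

Lemma near_inDB : \forall X \near close_nbhs S Xs, inDB X.
Proof.
apply: filter_forall => j.
by have := near_unitmx (cvg_entrywise_mask j j); rewrite /Defs.mask hdiag; apply.
Qed.

Lemma near_Hblk_close e : 0 < e ->
  \forall X \near close_nbhs S Xs, close_on S Xs e (Hblk A S X).
Proof.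
move=> e_gt0.
have /filter_forall : forall t : 'I_N * 'I_N * 'I_b * 'I_b,
    \forall X \near close_nbhs S Xs,
      `|Hblk A S X t.1.1.1 t.1.1.2 t.1.2 t.2
        - Hblk A S Xs t.1.1.1 t.1.1.2 t.1.2 t.2| < e.
  move=> [[[p q] r] c]; have /cvgrPdist_lt := cvg_entrywise_Hblk p q r c.
  by move=> /(_ e e_gt0); apply: filterS => X; rewrite distrC.
apply: filterS => X close_t p q r c pqS.
by rewrite -(Xs_fixed p q pqS); exact: (close_t (p, q, r, c)).
Qed.


Lemma Hblk_close_below e : 0 < e -> exists2 eta : R, 0 < eta &
  forall r X, close_on (blocks_below S r) Xs eta X ->
    close_on (blocks_below S r.+1) Xs e (Hblk A S X).
Proof.
move=> e_gt0; have [eta eta_gt0 close_H] := near_Hblk_close e e_gt0.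
exists eta => // r X Xeta p q rr cc pqr.
pose X' p' q' := if (blk_rank p' q' < r)%N then X p' q' else Xs p' q'.
have X'eta : close_on S Xs eta X'.
  move=> p' q' r' c' pqS'; rewrite /X'.
  case: ifP => r'r; last by rewrite subrr normr0.
  by apply: Xeta; rewrite inE pqS' r'r.
move: pqr; rewrite inE /= => /andP[pqS pq_r].
rewrite (Hblk_local A S X X'); first exact: close_H X'eta p q rr cc pqS.
by move=> p' q' _ lt_pq; rewrite /X' ifT //; lia.
Qed.

Lemma async_run_close r e : 0 < e -> exists2 d : R, 0 < d &
  forall s u x, admissible_shifts S shat s -> async_run A S s u x ->
  close_on S Xs d (x 1%N) ->
  forall k, (1 <= k)%N -> close_on (blocks_below S r) Xs e (x k).
Proof.
elim: r e => [|r IHr] e e_gt0.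
  by exists 1 => // s u x _ _ _ k _ p q rr cc; rewrite inE ltn0 andbF.
have [eta eta_gt0 close_H] := Hblk_close_below e e_gt0.
have [d d_gt0 close_r] := IHr eta eta_gt0.
exists (Num.min d e); first by rewrite lt_min d_gt0 e_gt0.
move=> s u x hs hx x1_close k k_gt0 p q rr cc pqr.
have x1_d : close_on S Xs d (x 1%N).
  by apply: close_on_le x1_close; rewrite ge_min lexx.
have pqS := blocks_below_sub S r.+1 _ pqr.
pose P (M : 'M[R]_b) := forall r' c', `|M r' c' - Xs p q r' c'| < e.
apply: (async_run_invariant hx P p q 1 pqS (leqnn 1) _ _ k k_gt0).
  by move=> r' c'; have := x1_close p q r' c' pqS; rewrite lt_min => /andP[].
move=> k' k'_gt0 r' c'; apply: close_H pqr.
apply: (delayed_blockwise hs) k'_gt0 _ => [|k'' k''_gt0 _].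
  exact: blocks_below_sub.
exact: close_r s u x hs hx x1_d k'' k''_gt0.
Qed.

Lemma async_run_exact s u x : admissible_shifts S shat s ->
  admissible_update S u -> async_run A S s u x ->
  forall r, \forall k \near \oo, agree_on (blocks_below S r) Xs (x k).
Proof.
move=> hs hu hx; elim=> [|r [K _ agree_K]].
  by apply: nearW => k p q rr cc; rewrite inE ltn0 andbF.
have H_agree k : (K + shat < k)%N ->
    forall p q, (p, q) \in blocks_below S r.+1 ->
    Hblk A S (delayed x s k) p q = Xs p q.
  move=> k_gt; apply: (Hblk_agree_below Xs_fixed r).
  apply: (delayed_blockwise hs) => [||k' _ /andP[k'_ge _]].
  - exact: blocks_below_sub.
  - by lia.
  - by apply: agree_K; rewrite /=; lia.
suff: \forall k \near \oo,
    forall pq, pq \in blocks_below S r.+1 -> x k pq.1 pq.2 = Xs pq.1 pq.2.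
  by apply: filterS => k agree_k p q rr cc /agree_k ->.
apply: filter_forall => -[p q].
have [pqr|_] := boolP ((p, q) \in blocks_below S r.+1); last exact: nearW.
have pqS := blocks_below_sub S r.+1 _ pqr.
have [l [l_gt ul]] := hu.2 (p, q) pqS (K + shat)%N.
have l_gt0 : (1 <= l)%N by lia.
exists l.+1 => // k lk _ /=.
apply: (async_run_invariant hx (fun M => M = Xs p q) p q l.+1 pqS _ _ _ k lk) => //.
  by rewrite hx // ul eqxx; apply: H_agree.
by move=> k' lk'; apply: H_agree => //; lia.
Qed.

End LocalConvergence.

Theorem theorem6 (R : realType) (N b : nat) (A : 'M[R]_(N * b))
  (S : {set 'I_N * 'I_N}) (hdiag : forall i : 'I_N, (i, i) \in S)
  (Xs : 'I_N -> 'I_N -> 'M[R]_b)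
  (hXsD : inDB Xs)
  (hfix : forall i j : 'I_N, (i, j) \in S -> Hblk A S Xs i j = Xs i j)
  (shat : nat) :
  exists2 delta : R, 0 < delta &
    forall (s : nat -> 'I_N -> 'I_N -> 'I_b -> 'I_b -> nat)
           (u : nat -> 'I_N * 'I_N) (x : nat -> 'I_N -> 'I_N -> 'M[R]_b),
      admissible_shifts S shat s ->
      admissible_update S u ->
      async_run A S s u x ->
      (forall (i j : 'I_N) (r c : 'I_b), (i, j) \in S ->
         `|x 1%N i j r c - Xs i j r c| < delta) ->
      (forall k : nat, (1 <= k)%N -> inDB (x k) /\ inDB (delayed x s k)) /\
      (forall (i j : 'I_N) (r c : 'I_b), (i, j) \in S ->
         (fun k : nat => x k i j r c) @ \oo --> Xs i j r c).
Proof.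
have [d d_gt0 close_inDB] := near_inDB S Xs hdiag hXsD.
have [delta delta_gt0 stable] :=
  async_run_close A S Xs hdiag hXsD hfix shat N.*2 d d_gt0.
exists delta => // s u x hs hu hx x1_close.
have close_x := stable s u x hs hx x1_close.
rewrite blocks_below_all in close_x.
split=> [k k_gt0 | i j r c ijS].
  split; apply: close_inDB; first exact: close_x.
  by apply: (delayed_blockwise hs) k_gt0 _ => // k' k'_gt0 _; exact: close_x.
apply: cvg_near_cst; have := async_run_exact A S Xs hfix shat s u x hs hu hx N.*2.
by rewrite blocks_below_all; apply: filterS => k /(_ i j r c ijS).
Qed.
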